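(* Let $q\ge1$ and assume Hypothesis (H$_q$). Then for every $\theta>0$, $$\Big|f\Big(\frac{m(a+b)}{2}\Big)-\frac{\Gamma(\theta+1)2^{\theta-1}}{m^\theta(b-a)^\theta}\Big[J^\theta_{(\frac{m(a+b)}{2})^-}f(ma)+J^\theta_{(\frac{m(a+b)}{2})^+}f(mb)\Big]\Big|$$ $$\le\frac{m(b-a)}{4}\cdot\frac{1}{\theta+1}\Big(\frac{1}{\alpha+\theta+1}\Big)^{\frac1q}\Big\{\Big[(\theta+1)\Big|f'\Big(\frac{m(a+b)}2\Big)\Big|^q+\alpha m|f'(a)|^q\Big]^{\frac1q}+\Big[(\theta+1)\Big|f'\Big(\frac{m(a+b)}2\Big)\Big|^q+\alpha m|f'(b)|^q\Big]^{\frac1q}\Big\}.$$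
   Context: Let $\Gamma$ denote Euler's Gamma function. For $\theta>0$, $c=\frac{m(a+b)}{2}$: $J^\theta_{c^-}f(ma)=\frac{1}{\Gamma(\theta)}\int_{ma}^{c}(s-ma)^{\theta-1}f(s)\,ds$ and $J^\theta_{c^+}f(mb)=\frac{1}{\Gamma(\theta)}\int_{c}^{mb}(mb-s)^{\theta-1}f(s)\,ds$. $(\alpha,m)$-convexity: for $(\alpha,m)\in[0,1]\times(0,1]$ and an interval $K\subseteq[0,\infty)$, a function $g:K\to\mathbb{R}$ is $(\alpha,m)$-convex on $K$ if $g(tX+m(1-t)Y)\le t^\alpha g(X)+m(1-t^\alpha)g(Y)$ for all $X,Y\in K$ and $t\in[0,1]$ with $tX+m(1-t)Y\in K$ (convention $0^0=1$). Hypothesis (H$_q$): $I\subseteq[0,\infty)$ is an interval, $f:I\to\mathbb{R}$ is differentiable on the interior $I^\circ$, $m\in(0,1]$, $\alpha\in[0,1]$, $a<b$ with $ma,b\in I^\circ$, $f'$ is Lebesgue integrable on $[ma,mb]$, and $|f'|^q$ is $(\alpha,m)$-convex on $[ma,b]$. *)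

From Stdlib Require Import Reals Lra ClassicalEpsilon.
Open Scope R_scope.

(* Real power with the conventions x^0 = 1 (incl. 0^0 = 1) and 0^y = 0 for y <> 0;
   for x > 0 it is Rpower x y = exp (y ln x). Only used with x >= 0. *)
Definition rpow (x y : R) : R :=
  if Req_EM_T x 0 then (if Req_EM_T y 0 then 1 else 0) else Rpower x y.

(* Improper Riemann integral over the open interval (lo, hi), lo < hi:
   the limit of int_x^y g as x -> lo+ and y -> hi-. *)
Definition improper_int_is (g : R -> R) (lo hi v : R) : Prop :=
  (forall x y, lo < x -> x <= y -> y < hi -> inhabited (Riemann_integrable g x y)) /\
  (forall eps, 0 < eps -> exists delta, 0 < delta /\
     forall x y (pr : Riemann_integrable g x y),
       lo < x -> x < lo + delta -> x <= y -> hi - delta < y -> y < hi ->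
       Rabs (RiemannInt pr - v) < eps).

Definition improper_int (g : R -> R) (lo hi : R) : R :=
  epsilon (inhabits 0) (fun v => improper_int_is g lo hi v).

Definition improper_int_0_infty_is (g : R -> R) (v : R) : Prop :=
  (forall x y, 0 < x -> x <= y -> inhabited (Riemann_integrable g x y)) /\
  (forall eps, 0 < eps -> exists delta M, 0 < delta /\
     forall x y (pr : Riemann_integrable g x y),
       0 < x -> x < delta -> x <= y -> M < y ->
       Rabs (RiemannInt pr - v) < eps).

Definition Gamma (t : R) : R :=
  epsilon (inhabits 0)
    (fun v => improper_int_0_infty_is (fun s => Rpower s (t - 1) * exp (- s)) v).

(* Riemann--Liouville fractional integrals, with c the upper/lower endpoint:
   J^th_{c-} f(x) = 1/Gamma(th) int_x^c (s-x)^(th-1) f(s) ds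
   J^th_{c+} f(y) = 1/Gamma(th) int_c^y (y-s)^(th-1) f(s) ds *)
Definition J_left (th : R) (c : R) (f : R -> R) (x : R) : R :=
  / Gamma th * improper_int (fun s => Rpower (s - x) (th - 1) * f s) x c.

Definition J_right (th : R) (c : R) (f : R -> R) (y : R) : R :=
  / Gamma th * improper_int (fun s => Rpower (y - s) (th - 1) * f s) c y.

Definition is_interval (I : R -> Prop) : Prop :=
  forall x y z, I x -> I z -> x <= y <= z -> I y.

(* (alpha,m)-convexity on K, with t^alpha := rpow t alpha (so 0^0 = 1). *)
Definition alpha_m_convex (alpha m : R) (K : R -> Prop) (g : R -> R) : Prop :=
  forall X Y t, K X -> K Y -> 0 <= t <= 1 -> K (t * X + m * (1 - t) * Y) ->
    g (t * X + m * (1 - t) * Y) <= rpow t alpha * g X + m * (1 - rpow t alpha) * g Y.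

From Stdlib Require Import Reals Lra ClassicalEpsilon Classical FunctionalExtensionality.
From Coquelicot Require Import Coquelicot.
Open Scope R_scope.

(* Put c = m(a+b)/2 and L = c - ma = mb - c.  The reflection s -> -s turns J_right into a
   left-sided integral, so everything rests on a ONE-SIDED ESTIMATE for a function h that is
   differentiable on [lo, hi]: the weighted integral V = int_lo^hi (s-lo)^(th-1) h(s) ds exists
   as an improper integral (the substitution w = (s-lo)^th/th makes it a proper integral of a
   function continuous up to w = 0), and if |h'(s)| <= K0 + K1 (s-lo)^al then
   |h(hi) L^th/th - V| <= K0 L^(th+1)/(th(th+1)) + K1 L^(th+al+1)/(th(th+al+1)).  The proof
   compares h with a primitive of the majorant, so no integrability of h' is needed.
   The majorant comes from (alpha,m)-convexity: |h'|^q lies below tau^alpha A + m(1-tau^alpha) B,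
   and the tangent line of the concave map x -> x^(1/q) at the weighted mean Y of this bound
   (a power-mean argument) gives a majorant whose weighted integral is L^(th+1) Y^(1/q)/(th(th+1)).
   Finally Gamma(th+1) = th Gamma(th) > 0, proved from the definition of Gamma, identifies the
   normalising constant, and the mean of the two half estimates is the theorem. *)

(** * Real powers *)

Lemma Rpower_gt0 x y : 0 < Rpower x y.
Proof. unfold Rpower; apply exp_pos. Qed.

Lemma Rpower_1l t : Rpower 1 t = 1.
Proof. unfold Rpower. rewrite ln_1, Rmult_0_r, exp_0. reflexivity. Qed.

Lemma Rpower_plus1 x p : 0 < x -> Rpower x (p + 1) = Rpower x p * x.
Proof. intros Hx. rewrite Rpower_plus, Rpower_1 by exact Hx. reflexivity. Qed.

Lemma Rpower_Rpower_inv x th : 0 < x -> th <> 0 -> Rpower (Rpower x th) (/ th) = x.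
Proof. intros Hx Hth. rewrite Rpower_mult, Rinv_r, Rpower_1 by assumption. reflexivity. Qed.

Lemma Rpower_div u L p : 0 < u -> 0 < L -> Rpower (u / L) p = Rpower u p / Rpower L p.
Proof.
  intros Hu HL. unfold Rdiv. rewrite <- Rpower_mult_distr by (try apply Rinv_0_lt_compat; auto).
  f_equal. unfold Rpower. rewrite ln_Rinv, <- exp_Ropp by exact HL. f_equal. ring.
Qed.

Lemma exp_le x y : x <= y -> exp x <= exp y.
Proof. intros [H|<-]; [left; apply exp_increasing, H | lra]. Qed.

Lemma Rpower_le_1 z r : 1 <= z -> r <= 0 -> Rpower z r <= 1.
Proof.
  intros Hz Hr. unfold Rpower. rewrite <- exp_0. apply exp_le.
  assert (0 <= ln z).
  { rewrite <- ln_1. destruct Hz as [Hz|<-]; [left; apply ln_increasing|]; lra. }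
  nra.
Qed.

Lemma Rpower_ge_1 z r : 0 < z <= 1 -> r <= 0 -> 1 <= Rpower z r.
Proof.
  intros Hz Hr. unfold Rpower. rewrite <- exp_0. apply exp_le.
  assert (ln z <= 0).
  { rewrite <- ln_1. destruct (proj2 Hz) as [H| ->]; [left; apply ln_increasing|]; lra. }
  nra.
Qed.

Lemma rpow_pos x y : 0 < x -> rpow x y = Rpower x y.
Proof. intros H; unfold rpow; destruct (Req_EM_T x 0); [lra | reflexivity]. Qed.

Lemma rpow_0l y : y <> 0 -> rpow 0 y = 0.
Proof.
  intros H; unfold rpow.
  destruct (Req_EM_T 0 0); [destruct (Req_EM_T y 0); [lra | reflexivity] | lra].
Qed.

Lemma rpow_ge0 x y : 0 <= rpow x y.
Proof.
  unfold rpow. destruct (Req_EM_T x 0); [destruct (Req_EM_T y 0); lra|].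
  left; apply Rpower_gt0.
Qed.

Lemma rpow_rpow x q : 0 <= x -> 1 <= q -> rpow (rpow x q) (1 / q) = x.
Proof.
  intros Hx Hq. assert (Hq0 : 1 / q <> 0) by (apply Rgt_not_eq, Rdiv_lt_0_compat; lra).
  destruct (Req_dec x 0) as [->|Hx0].
  - rewrite rpow_0l by lra. apply rpow_0l, Hq0.
  - rewrite (rpow_pos x), rpow_pos by (try apply Rpower_gt0; lra).
    rewrite Rpower_mult. replace (q * (1 / q)) with 1 by (field; lra). apply Rpower_1; lra.
Qed.

Lemma rpow_mult x y p : 0 <= x -> 0 <= y -> p <> 0 -> rpow (x * y) p = rpow x p * rpow y p.
Proof.
  intros Hx Hy Hp. destruct (Req_dec x 0) as [->|Hx0].
  { rewrite Rmult_0_l, rpow_0l by exact Hp. ring. }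
  destruct (Req_dec y 0) as [->|Hy0].
  { rewrite Rmult_0_r, rpow_0l by exact Hp. ring. }
  rewrite !rpow_pos by nra. rewrite Rpower_mult_distr; lra.
Qed.

(** * Elementary calculus *)

Lemma is_derive_eq (f : R -> R) x l l' : is_derive f x l -> l = l' -> is_derive f x l'.
Proof. intros H ->; exact H. Qed.

Lemma is_derive_continuous (f : R -> R) x l : is_derive f x l -> continuous f x.
Proof. intros H. apply (ex_derive_continuous (K:=R_AbsRing) (V:=R_NormedModule)). exists l; exact H. Qed.

Lemma continuous_of_eps_delta (f : R -> R) x :
  (forall eps, 0 < eps -> exists d, 0 < d /\ forall y, Rabs (y - x) < d -> Rabs (f y - f x) < eps) ->
  continuous f x.
Proof.
  intros H. apply filterlim_locally. intros [eps He].
  destruct (H eps He) as [d [Hd Hy]]. exists (mkposreal d Hd). intros y Hb. apply Hy, Hb.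
Qed.

Lemma nondecreasing_of_derive (k dk : R -> R) (u v : R) : u <= v ->
  (forall s, u <= s <= v -> is_derive k s (dk s)) ->
  (forall s, u <= s <= v -> 0 <= dk s) -> k u <= k v.
Proof.
  intros Huv Hd Hp.
  destruct (MVT_gen k u v dk) as [c [Hc Heq]];
    rewrite ?Rmin_left, ?Rmax_right in * by lra.
  - intros x Hx. apply Hd; lra.
  - intros x Hx. apply continuity_pt_filterlim, (is_derive_continuous _ _ (dk x)), Hd; lra.
  - assert (0 <= dk c * (v - u)) by (apply Rmult_le_pos; [apply Hp; lra | lra]). lra.
Qed.

Lemma increment_le_of_derive_bound (h h' Ga G : R -> R) (s t : R) : s <= t ->
  (forall u, s <= u <= t -> is_derive h u (h' u)) ->
  (forall u, s <= u <= t -> is_derive Ga u (G u)) ->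
  (forall u, s <= u <= t -> Rabs (h' u) <= G u) ->
  Rabs (h t - h s) <= Ga t - Ga s.
Proof.
  intros Hst Hh HGa Hb. apply Rabs_le.
  assert (h s + Ga s <= h t + Ga t).
  { apply (nondecreasing_of_derive (fun u => h u + Ga u) (fun u => h' u + G u)); [lra| |].
    - intros u Hu. apply (is_derive_plus h Ga); auto.
    - intros u Hu. specialize (Hb u Hu). apply Rabs_le_between in Hb. lra. }
  assert (Ga s - h s <= Ga t - h t).
  { apply (nondecreasing_of_derive (fun u => Ga u - h u) (fun u => G u - h' u)); [lra| |].
    - intros u Hu. apply (is_derive_minus Ga h); auto.
    - intros u Hu. specialize (Hb u Hu). apply Rabs_le_between in Hb. lra. }
  lra.
Qed.

Lemma is_derive_Rpower x p : 0 < x -> is_derive (fun y => Rpower y p) x (p * Rpower x (p - 1)).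
Proof. intros Hx. apply is_derive_Reals, derivable_pt_lim_power, Hx. Qed.

Lemma continuous_Rpower x p : 0 < x -> continuous (fun y => Rpower y p) x.
Proof. intros Hx. eapply is_derive_continuous, is_derive_Rpower, Hx. Qed.

Lemma is_derive_Rpower_shift lo p s : lo < s ->
  is_derive (fun s => Rpower (s - lo) p) s (p * Rpower (s - lo) (p - 1)).
Proof.
  intros H. eapply is_derive_eq.
  - apply (is_derive_comp (fun x => Rpower x p) (fun s => s - lo)).
    + apply is_derive_Rpower; lra.
    + auto_derive; auto.
  - unfold scal; simpl; unfold mult; simpl. ring.
Qed.

Lemma continuous_Rpower_shift lo p s : lo < s -> continuous (fun s => Rpower (s - lo) p) s.
Proof. intros H. eapply is_derive_continuous, is_derive_Rpower_shift, H. Qed.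

Lemma eq_of_close x y : (forall eps, 0 < eps -> Rabs (x - y) < eps) -> x = y.
Proof.
  intros H. destruct (Req_dec x y) as [e|n]; [exact e|].
  assert (0 < Rabs (x - y)) by (apply Rabs_pos_lt; lra).
  specialize (H _ H0). lra.
Qed.

Lemma le_of_le_plus_small A B C eta0 : 0 < eta0 -> 0 <= C ->
  (forall eta, 0 < eta < eta0 -> A <= B + C * eta) -> A <= B.
Proof.
  intros H0 HC H. destruct (Rle_dec A B) as [r|n]; [exact r|].
  set (e := Rmin (eta0 / 2) ((A - B) / (2 * (C + 1)))).
  assert (He : 0 < e) by (apply Rmin_pos; [lra | apply Rdiv_lt_0_compat; lra]).
  assert (He1 : e <= eta0 / 2) by apply Rmin_l.
  assert (He2 : e <= (A - B) / (2 * (C + 1))) by apply Rmin_r.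
  specialize (H e ltac:(lra)).
  assert (C * e <= (C + 1) * ((A - B) / (2 * (C + 1)))) by (apply Rmult_le_compat; lra).
  replace ((C + 1) * ((A - B) / (2 * (C + 1)))) with ((A - B) / 2) in H1 by (field; lra). lra.
Qed.

Lemma ratio_in_unit u L : 0 < L -> 0 <= u <= L -> 0 <= u / L <= 1.
Proof.
  intros HL Hu. split; [apply Rdiv_le_0_compat; lra|].
  apply Rmult_le_reg_r with L; [exact HL|]. unfold Rdiv. rewrite Rmult_assoc, Rinv_l; lra.
Qed.

(** * The tangent line of the concave power [x^(1/q)] *)

(* Bernoulli's inequality for exponents in (0, 1]: the concave power lies below its tangent at 1. *)
Lemma bernoulli_Rpower z r : 0 < z -> 0 < r <= 1 -> Rpower z r <= 1 + r * (z - 1).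
Proof.
  intros Hz Hr.
  set (D s := 1 + r * (s - 1) - Rpower s r).
  set (dD s := r * (1 - Rpower s (r - 1))).
  assert (HD : forall s, 0 < s -> is_derive D s (dD s)).
  { intros s Hs. eapply is_derive_eq.
    - apply (is_derive_minus (fun s => 1 + r * (s - 1)) (fun s => Rpower s r)).
      + auto_derive; auto.
      + apply is_derive_Rpower, Hs.
    - unfold dD, minus, plus, opp; simpl. ring. }
  assert (HD1 : D 1 = 0) by (unfold D; rewrite Rpower_1l; ring).
  enough (H : D 1 <= D z) by (rewrite HD1 in H; unfold D in H; lra).
  destruct (Rle_dec 1 z).
  - apply (nondecreasing_of_derive D dD); [lra | intros s Hs; apply HD; lra |].
    intros s Hs. pose proof (Rpower_le_1 s (r - 1) ltac:(lra) ltac:(lra)).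
    unfold dD; apply Rmult_le_pos; lra.
  - apply Ropp_le_cancel.
    apply (nondecreasing_of_derive (fun s => - D s) (fun s => - dD s)); [lra| |].
    + intros s Hs. apply (is_derive_opp D), HD; lra.
    + intros s Hs. pose proof (Rpower_ge_1 s (r - 1) ltac:(lra) ltac:(lra)).
      assert (0 <= r * (Rpower s (r - 1) - 1)) by (apply Rmult_le_pos; lra). unfold dD; lra.
Qed.

Lemma root_tangent_bound x Y q : 0 <= x -> 0 < Y -> 1 <= q ->
  rpow x (1 / q) <= Rpower Y (1 / q) + (1 / q) * Rpower Y (1 / q - 1) * (x - Y).
Proof.
  intros Hx HY Hq.
  assert (Hr : 0 < 1 / q <= 1).
  { split; [apply Rdiv_lt_0_compat; lra|].
    unfold Rdiv; rewrite Rmult_1_l, <- Rinv_1. apply Rinv_le_contravar; lra. }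
  assert (HYr : Rpower Y (1 / q - 1) * Y = Rpower Y (1 / q)).
  { rewrite <- Rpower_plus1 by exact HY. f_equal; ring. }
  assert (Hp := Rpower_gt0 Y (1 / q - 1)).
  destruct (Req_dec x 0) as [->|Hx0].
  - rewrite rpow_0l, <- HYr by lra.
    assert (0 <= (1 - 1 / q) * (Rpower Y (1 / q - 1) * Y)) by (apply Rmult_le_pos; nra).
    lra.
  - rewrite rpow_pos by lra.
    pose proof (bernoulli_Rpower (x / Y) (1 / q) ltac:(apply Rdiv_lt_0_compat; lra) Hr) as B.
    replace x with (Y * (x / Y)) at 1 by (field; lra).
    rewrite <- Rpower_mult_distr by (try apply Rdiv_lt_0_compat; lra).
    apply Rmult_le_compat_l with (r := Rpower Y (1 / q)) in B; [|left; apply Rpower_gt0].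
    eapply Rle_trans; [exact B|]. rewrite <- HYr. right. field. lra.
Qed.

(** * Improper integrals *)

Lemma improper_int_is_iff g lo hi v :
  improper_int_is g lo hi v <->
  (forall x y, lo < x -> x <= y -> y < hi -> ex_RInt g x y) /\
  (forall eps, 0 < eps -> exists delta, 0 < delta /\ forall x y,
     lo < x -> x < lo + delta -> x <= y -> hi - delta < y -> y < hi ->
     Rabs (RInt g x y - v) < eps).
Proof.
  split; intros [Hi Hl]; split.
  - intros x y H1 H2 H3. destruct (Hi x y H1 H2 H3) as [pr]. apply ex_RInt_Reals_1, pr.
  - intros eps Heps. destruct (Hl eps Heps) as [d [Hd H]]. exists d; split; [exact Hd|].
    intros x y H1 H2 H3 H4 H5. destruct (Hi x y H1 H3 H5) as [pr].
    rewrite (RInt_Reals _ _ _ pr). auto.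
  - intros x y H1 H2 H3. constructor. apply ex_RInt_Reals_0; auto.
  - intros eps Heps. destruct (Hl eps Heps) as [d [Hd H]]. exists d; split; [exact Hd|].
    intros x y pr H1 H2 H3 H4 H5. rewrite <- RInt_Reals. auto.
Qed.

Lemma improper_int_eq g lo hi v : lo < hi -> improper_int_is g lo hi v -> improper_int g lo hi = v.
Proof.
  intros Hlh Hv. unfold improper_int.
  assert (Hv' : improper_int_is g lo hi (epsilon (inhabits 0) (fun v => improper_int_is g lo hi v)))
    by (apply epsilon_spec; exists v; exact Hv).
  set (v' := epsilon _ _) in *. apply eq_of_close. intros eps Heps.
  apply improper_int_is_iff in Hv as [Hi Hl]. apply improper_int_is_iff in Hv' as [_ Hl'].
  destruct (Hl (eps / 2)) as [d1 [Hd1 H1]]; [lra|].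
  destruct (Hl' (eps / 2)) as [d2 [Hd2 H2]]; [lra|].
  set (d := Rmin (Rmin d1 d2) ((hi - lo) / 2)).
  assert (Hd : 0 < d) by (apply Rmin_pos; [apply Rmin_pos|]; lra).
  assert (d <= d1) by (eapply Rle_trans; apply Rmin_l).
  assert (d <= d2) by (eapply Rle_trans; [apply Rmin_l | apply Rmin_r]).
  assert (d <= (hi - lo) / 2) by apply Rmin_r.
  specialize (H1 (lo + d / 2) (hi - d / 2) ltac:(lra) ltac:(lra) ltac:(lra) ltac:(lra) ltac:(lra)).
  specialize (H2 (lo + d / 2) (hi - d / 2) ltac:(lra) ltac:(lra) ltac:(lra) ltac:(lra) ltac:(lra)).
  apply Rabs_def2 in H1. apply Rabs_def2 in H2. apply Rabs_def1; lra.
Qed.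

Lemma RInt_reflect (g : R -> R) x y : ex_RInt (fun u => g (- u)) (- y) (- x) ->
  ex_RInt g x y /\ RInt g x y = RInt (fun u => g (- u)) (- y) (- x).
Proof.
  intros [l Hl].
  assert (H : is_RInt g x y l).
  { rewrite <- (Ropp_involutive y), <- (Ropp_involutive x) in Hl.
    apply (is_RInt_comp_opp (V:=R_NormedModule)), is_RInt_swap, is_RInt_opp in Hl.
    rewrite !Ropp_involutive in Hl.
    eapply is_RInt_ext; [|exact Hl].
    intros t _. unfold opp; simpl. rewrite !Ropp_involutive. reflexivity. }
  split; [exists l; exact H|]. rewrite (is_RInt_unique _ _ _ _ H), (is_RInt_unique _ _ _ _ Hl).
  reflexivity.
Qed.

Lemma improper_int_is_reflect g g' lo hi v : (forall u, g' u = g (- u)) ->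
  improper_int_is g' (- hi) (- lo) v -> improper_int_is g lo hi v.
Proof.
  intros Hg. replace g' with (fun u => g (- u)) by (apply functional_extensionality; intros; auto).
  rewrite !improper_int_is_iff. intros [Hi Hl]. split.
  - intros x y H1 H2 H3. apply RInt_reflect, Hi; lra.
  - intros eps Heps. destruct (Hl eps Heps) as [d [Hd H]]. exists d; split; [exact Hd|].
    intros x y H1 H2 H3 H4 H5.
    rewrite (proj2 (RInt_reflect g x y (Hi (- y) (- x) ltac:(lra) ltac:(lra) ltac:(lra)))).
    apply H; lra.
Qed.

(** * The Gamma function *)

Definition gamma_integrand (t s : R) : R := Rpower s (t - 1) * exp (- s).

Lemma gamma_integrand_pos t s : 0 < gamma_integrand t s.
Proof. apply Rmult_lt_0_compat; [apply Rpower_gt0 | apply exp_pos]. Qed.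

Lemma gamma_integrand_continuous t s : 0 < s -> continuous (gamma_integrand t) s.
Proof.
  intros H. apply (continuous_mult (fun s => Rpower s (t - 1)) (fun s => exp (- s))).
  - apply continuous_Rpower, H.
  - eapply is_derive_continuous. auto_derive; auto.
Qed.

Lemma ex_RInt_gamma t x y : 0 < x -> 0 < y -> ex_RInt (gamma_integrand t) x y.
Proof.
  intros Hx Hy. apply (ex_RInt_continuous (V:=R_CompleteNormedModule)). intros z Hz.
  apply gamma_integrand_continuous. eapply Rlt_le_trans; [|apply Hz]. apply Rmin_glb_lt; auto.
Qed.

Lemma RInt_gamma_Chasles t a b c : 0 < a -> 0 < b -> 0 < c ->
  RInt (gamma_integrand t) a c = RInt (gamma_integrand t) a b + RInt (gamma_integrand t) b c.
Proof.
  intros Ha Hb Hc. symmetry.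
  apply (RInt_Chasles (V:=R_CompleteNormedModule)); apply ex_RInt_gamma; auto.
Qed.

(* The integrand is positive, so its integral grows with the window. *)
Lemma RInt_gamma_mono t x' x y y' : 0 < x' <= x -> x <= y -> y <= y' ->
  RInt (gamma_integrand t) x y <= RInt (gamma_integrand t) x' y'.
Proof.
  intros Hx Hxy Hy.
  assert (Hnn : forall u v, 0 < u <= v -> 0 <= RInt (gamma_integrand t) u v).
  { intros u v Huv. apply RInt_ge_0; [lra | apply ex_RInt_gamma; lra |].
    intros; left; apply gamma_integrand_pos. }
  rewrite (RInt_gamma_Chasles t x' x y'), (RInt_gamma_Chasles t x y y') by lra.
  pose proof (Hnn x' x). pose proof (Hnn y y'). lra.
Qed.

(* Near [0] the integrand is at most [s^(t-1)], whose integral over (0, 1] is [1/t]. *)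
Lemma RInt_gamma_head t x y : 0 < t -> 0 < x <= y -> y <= 1 -> RInt (gamma_integrand t) x y <= / t.
Proof.
  intros Ht Hxy Hy.
  assert (Hpow : is_RInt (fun s => Rpower s (t - 1)) x y (/ t * Rpower y t - / t * Rpower x t)).
  { apply (is_RInt_derive (V:=R_CompleteNormedModule) (fun s => / t * Rpower s t)).
    - intros s Hs. rewrite Rmin_left in Hs by lra. eapply is_derive_eq.
      + apply is_derive_scal, is_derive_Rpower; lra.
      + simpl; field; lra.
    - intros s Hs. rewrite Rmin_left in Hs by lra. apply continuous_Rpower; lra. }
  eapply Rle_trans.
  - apply (RInt_le _ (fun s => Rpower s (t - 1))); [lra | apply ex_RInt_gamma; lra | eexists; exact Hpow |].
    intros s Hs. unfold gamma_integrand. rewrite <- (Rmult_1_r (Rpower s (t - 1))) at 2.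
    apply Rmult_le_compat_l; [left; apply Rpower_gt0|]. rewrite <- exp_0. apply exp_le. lra.
  - rewrite (is_RInt_unique _ _ _ _ Hpow).
    assert (Rpower y t <= 1) by (rewrite <- (Rpower_1l t); apply Rle_Rpower_l; lra).
    assert (0 < / t * Rpower x t) by (apply Rmult_lt_0_compat; [apply Rinv_0_lt_compat | apply Rpower_gt0]; lra).
    assert (/ t * Rpower y t <= / t * 1) by (apply Rmult_le_compat_l; [left; apply Rinv_0_lt_compat|]; lra).
    lra.
Qed.

Lemma gamma_integrand_tail t : exists C, 0 < C /\
  forall s, 1 <= s -> gamma_integrand t s <= C * exp (- s / 2).
Proof.
  set (k := 2 * (Rabs (t - 1) + 1)). pose proof (Rabs_pos (t - 1)) as Habs.
  assert (Hk : 0 < k) by (unfold k; lra).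
  exists (exp (Rabs (t - 1) * Rabs (ln k - 1))). split; [apply exp_pos|].
  intros s Hs. unfold gamma_integrand, Rpower. rewrite <- !exp_plus. apply exp_le.
  assert (Hl : ln s <= s / k + ln k - 1).
  { pose proof (exp_ineq1_le (ln (s / k))) as H.
    rewrite exp_ln in H by (apply Rdiv_lt_0_compat; lra).
    rewrite ln_div in H by lra. lra. }
  assert (Hl0 : 0 <= ln s) by (rewrite <- ln_1; destruct Hs as [Hs| <-]; [left; apply ln_increasing|]; lra).
  assert ((t - 1) * ln s <= Rabs (t - 1) * ln s) by (apply Rmult_le_compat_r; [exact Hl0 | apply Rle_abs]).
  assert (Rabs (t - 1) * ln s <= Rabs (t - 1) * (s / k) + Rabs (t - 1) * Rabs (ln k - 1)).
  { pose proof (Rle_abs (ln k - 1)). rewrite <- Rmult_plus_distr_l. apply Rmult_le_compat_l; lra. }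
  assert (Rabs (t - 1) * (s / k) <= s / 2).
  { unfold k. apply Rmult_le_reg_r with (2 * (Rabs (t - 1) + 1)); [lra|]. field_simplify; lra. }
  lra.
Qed.

Lemma RInt_gamma_tail t C x y : 0 < C -> (forall s, 1 <= s -> gamma_integrand t s <= C * exp (- s / 2)) ->
  1 <= x <= y -> RInt (gamma_integrand t) x y <= 2 * C.
Proof.
  intros HC Hb Hxy.
  assert (Hexp : is_RInt (fun s => C * exp (- s / 2)) x y (- 2 * C * exp (- y / 2) - (- 2 * C * exp (- x / 2)))).
  { apply (is_RInt_derive (V:=R_CompleteNormedModule) (fun s => - 2 * C * exp (- s / 2))).
    - intros s Hs. auto_derive; auto. rewrite Rdiv_def. field.
    - intros s Hs. eapply is_derive_continuous. auto_derive; auto. }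
  eapply Rle_trans.
  - apply (RInt_le _ (fun s => C * exp (- s / 2))); [lra | apply ex_RInt_gamma; lra | eexists; exact Hexp |].
    intros s Hs. apply Hb. lra.
  - rewrite (is_RInt_unique _ _ _ _ Hexp).
    assert (0 < exp (- y / 2)) by apply exp_pos.
    assert (exp (- x / 2) <= 1) by (rewrite <- exp_0; apply exp_le; lra). nra.
Qed.

Lemma RInt_gamma_bounded t : 0 < t -> exists B, forall x y, 0 < x <= y -> RInt (gamma_integrand t) x y <= B.
Proof.
  intros Ht. destruct (gamma_integrand_tail t) as [C [HC Hb]].
  exists (/ t + 2 * C). intros x y Hxy.
  pose proof (Rmin_l x 1). pose proof (Rmin_r x 1). pose proof (Rmax_l y 1). pose proof (Rmax_r y 1).
  assert (0 < Rmin x 1) by (apply Rmin_pos; lra).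
  eapply Rle_trans; [apply (RInt_gamma_mono t (Rmin x 1) x y (Rmax y 1)); lra|].
  rewrite (RInt_gamma_Chasles t _ 1) by lra.
  pose proof (RInt_gamma_head t (Rmin x 1) 1 Ht ltac:(lra) ltac:(lra)).
  pose proof (RInt_gamma_tail t C 1 (Rmax y 1) HC Hb ltac:(lra)). lra.
Qed.

Lemma improper0_iff g v :
  improper_int_0_infty_is g v <->
  (forall x y, 0 < x -> x <= y -> ex_RInt g x y) /\
  (forall eps, 0 < eps -> exists delta M, 0 < delta /\ forall x y,
     0 < x -> x < delta -> x <= y -> M < y -> Rabs (RInt g x y - v) < eps).
Proof.
  split; intros [Hi Hl]; split.
  - intros x y H1 H2. destruct (Hi x y H1 H2) as [pr]. apply ex_RInt_Reals_1, pr.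
  - intros eps Heps. destruct (Hl eps Heps) as [d [M [Hd H]]]. exists d, M; split; [exact Hd|].
    intros x y H1 H2 H3 H4. destruct (Hi x y H1 H3) as [pr].
    rewrite (RInt_Reals _ _ _ pr). auto.
  - intros x y H1 H2. constructor. apply ex_RInt_Reals_0; auto.
  - intros eps Heps. destruct (Hl eps Heps) as [d [M [Hd H]]]. exists d, M; split; [exact Hd|].
    intros x y pr H1 H2 H3 H4. rewrite <- RInt_Reals. auto.
Qed.

(* The Gamma integral converges: its value is the supremum of the integrals over windows. *)
Lemma gamma_integral_exists t : 0 < t -> exists G, 0 < G /\ improper_int_0_infty_is (gamma_integrand t) G.
Proof.
  intros Ht. destruct (RInt_gamma_bounded t Ht) as [B HB].
  set (E v := exists x y, 0 < x <= y /\ v = RInt (gamma_integrand t) x y).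
  assert (Hb : bound E) by (exists B; intros v [x [y [Hxy ->]]]; apply HB, Hxy).
  assert (Hne : exists v, E v) by (exists (RInt (gamma_integrand t) 1 1), 1, 1; split; [lra | reflexivity]).
  destruct (completeness E Hb Hne) as [G [Hub Hlub]].
  assert (HG12 : RInt (gamma_integrand t) 1 2 <= G) by (apply Hub; exists 1, 2; split; [lra | reflexivity]).
  assert (Hp : 0 < RInt (gamma_integrand t) 1 2).
  { apply RInt_gt_0; [lra | intros; apply gamma_integrand_pos | intros; apply gamma_integrand_continuous; lra]. }
  exists G. split; [lra|]. apply improper0_iff. split.
  - intros x y Hx Hxy. apply ex_RInt_gamma; lra.
  - intros eps Heps.
    assert (Hex : exists v, E v /\ G - eps < v).
    { apply NNPP. intros Hn. enough (G <= G - eps) by lra.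
      apply Hlub. intros v Hv. apply Rnot_lt_le. intros Hlt. apply Hn. exists v. split; auto. }
    destruct Hex as [v [[x0 [y0 [Hxy0 ->]]] Hv]].
    exists x0, y0. split; [lra|]. intros x y Hx Hx0 Hxy Hy.
    assert (RInt (gamma_integrand t) x0 y0 <= RInt (gamma_integrand t) x y) by (apply RInt_gamma_mono; lra).
    assert (RInt (gamma_integrand t) x y <= G) by (apply Hub; exists x, y; split; [lra | reflexivity]).
    apply Rabs_def1; lra.
Qed.

Lemma improper0_common_window g1 v1 g2 v2 eps d0 M0 : 0 < eps -> 0 < d0 ->
  improper_int_0_infty_is g1 v1 -> improper_int_0_infty_is g2 v2 ->
  exists x y, 0 < x < d0 /\ M0 < y /\ x <= y /\
    Rabs (RInt g1 x y - v1) < eps /\ Rabs (RInt g2 x y - v2) < eps.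
Proof.
  intros Heps Hd0 H1 H2. apply improper0_iff in H1 as [_ H1]. apply improper0_iff in H2 as [_ H2].
  destruct (H1 eps Heps) as [d1 [M1 [Hd1 H1']]].
  destruct (H2 eps Heps) as [d2 [M2 [Hd2 H2']]].
  set (x := Rmin (Rmin d1 d2) d0 / 2). set (y := Rmax (Rmax M1 M2) (Rmax M0 x) + 1).
  pose proof (Rmin_l (Rmin d1 d2) d0). pose proof (Rmin_r (Rmin d1 d2) d0).
  pose proof (Rmin_l d1 d2). pose proof (Rmin_r d1 d2).
  pose proof (Rmax_l (Rmax M1 M2) (Rmax M0 x)). pose proof (Rmax_r (Rmax M1 M2) (Rmax M0 x)).
  pose proof (Rmax_l M1 M2). pose proof (Rmax_r M1 M2). pose proof (Rmax_l M0 x). pose proof (Rmax_r M0 x).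
  assert (0 < Rmin (Rmin d1 d2) d0) by (repeat apply Rmin_pos; lra).
  exists x, y. unfold y, x in *. repeat split; try lra; [apply H1' | apply H2']; lra.
Qed.

Lemma improper0_unique g v v' :
  improper_int_0_infty_is g v -> improper_int_0_infty_is g v' -> v = v'.
Proof.
  intros H H'. apply eq_of_close. intros eps Heps.
  destruct (improper0_common_window g v g v' (eps / 2) 1 0 ltac:(lra) ltac:(lra) H H')
    as (x & y & _ & _ & _ & H1 & H2).
  apply Rabs_def2 in H1. apply Rabs_def2 in H2. apply Rabs_def1; lra.
Qed.

Lemma Gamma_spec t : 0 < t -> 0 < Gamma t /\ improper_int_0_infty_is (gamma_integrand t) (Gamma t).
Proof.
  intros Ht. destruct (gamma_integral_exists t Ht) as [G [HG HP]].
  assert (HS : improper_int_0_infty_is (gamma_integrand t) (Gamma t))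
    by (unfold Gamma; apply epsilon_spec; exists G; exact HP).
  rewrite (improper0_unique _ _ _ HS HP). split; assumption.
Qed.

Lemma RInt_gamma_by_parts t x y : 0 < t -> 0 < x <= y ->
  RInt (gamma_integrand (t + 1)) x y =
  Rpower x t * exp (- x) - Rpower y t * exp (- y) + t * RInt (gamma_integrand t) x y.
Proof.
  intros Ht Hxy.
  set (Phi s := - (Rpower s t * exp (- s))).
  assert (H1 : is_RInt (fun s => gamma_integrand (t + 1) s - t * gamma_integrand t s) x y (Phi y - Phi x)).
  { apply (is_RInt_derive (V:=R_CompleteNormedModule) Phi); intros s Hs; rewrite Rmin_left in Hs by lra.
    - eapply is_derive_eq.
      + apply (is_derive_opp (fun s => Rpower s t * exp (- s))).
        apply (is_derive_mult (fun s => Rpower s t) (fun s => exp (- s))).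
        * apply is_derive_Rpower; lra.
        * auto_derive; auto.
        * intros; apply Rmult_comm.
      + unfold gamma_integrand, opp, plus, mult; simpl. replace (t + 1 - 1) with t by ring. ring.
    - apply (continuous_minus (gamma_integrand (t + 1)) (fun s => t * gamma_integrand t s)).
      + apply gamma_integrand_continuous; lra.
      + apply (continuous_scal_r t (gamma_integrand t)), gamma_integrand_continuous; lra. }
  assert (H2 := RInt_correct (V:=R_CompleteNormedModule) _ _ _ (ex_RInt_gamma t x y ltac:(lra) ltac:(lra))).
  apply is_RInt_unique.
  replace (Rpower x t * exp (- x) - Rpower y t * exp (- y) + t * RInt (gamma_integrand t) x y)
    with (plus (Phi y - Phi x) (scal t (RInt (gamma_integrand t) x y)))
    by (unfold Phi, plus, scal; simpl; unfold mult; simpl; ring).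
  eapply is_RInt_ext;
    [|apply (is_RInt_plus (V:=R_CompleteNormedModule) _ _ _ _ _ _ H1 (is_RInt_scal _ _ _ t _ H2))].
  intros s _. unfold plus, scal; simpl; unfold mult; simpl. ring.
Qed.

Lemma gamma_boundary_at_0 t eps : 0 < t -> 0 < eps ->
  exists d, 0 < d /\ forall x, 0 < x < d -> Rpower x t * exp (- x) < eps.
Proof.
  intros Ht Heps. exists (Rpower eps (/ t)). split; [apply Rpower_gt0|]. intros x Hx.
  assert (H : Rpower x t < Rpower (Rpower eps (/ t)) t) by (apply Rlt_Rpower_l; lra).
  rewrite Rpower_mult, Rinv_l, Rpower_1 in H by lra.
  assert (exp (- x) <= 1) by (rewrite <- exp_0; apply exp_le; lra).
  pose proof (Rpower_gt0 x t). nra.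
Qed.

Lemma gamma_boundary_at_infty t eps : 0 < eps ->
  exists M, forall y, M < y -> Rpower y t * exp (- y) < eps.
Proof.
  intros Heps. destruct (gamma_integrand_tail (t + 1)) as [C [HC Hb]].
  exists (Rmax 1 (- 2 * ln (eps / C))). intros y Hy.
  pose proof (Rmax_l 1 (- 2 * ln (eps / C))). pose proof (Rmax_r 1 (- 2 * ln (eps / C))).
  specialize (Hb y ltac:(lra)). unfold gamma_integrand in Hb. replace (t + 1 - 1) with t in Hb by ring.
  assert (exp (- y / 2) < eps / C).
  { rewrite <- (exp_ln (eps / C)) by (apply Rdiv_lt_0_compat; lra). apply exp_increasing. lra. }
  assert (C * exp (- y / 2) < C * (eps / C)) by (apply Rmult_lt_compat_l; lra).
  replace (C * (eps / C)) with eps in * by (field; lra). lra.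
Qed.

Lemma Gamma_succ t : 0 < t -> Gamma (t + 1) = t * Gamma t.
Proof.
  intros Ht. apply eq_of_close. intros eps Heps.
  destruct (gamma_boundary_at_0 t (eps / 4) Ht ltac:(lra)) as [d [Hd Hbd0]].
  destruct (gamma_boundary_at_infty t (eps / 4) ltac:(lra)) as [M HbdM].
  destruct (improper0_common_window _ _ _ _ (eps / (4 * (t + 1))) d M
              ltac:(apply Rdiv_lt_0_compat; lra) Hd
              (proj2 (Gamma_spec (t + 1) ltac:(lra))) (proj2 (Gamma_spec t Ht)))
    as (x & y & Hx & Hy & Hxy & H1 & H0).
  rewrite RInt_gamma_by_parts in H1 by lra.
  specialize (Hbd0 x Hx). specialize (HbdM y Hy).
  assert (0 < Rpower x t * exp (- x)) by (apply Rmult_lt_0_compat; [apply Rpower_gt0 | apply exp_pos]).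
  assert (0 < Rpower y t * exp (- y)) by (apply Rmult_lt_0_compat; [apply Rpower_gt0 | apply exp_pos]).
  set (e := eps / (4 * (t + 1))) in *.
  assert (He : e * (t + 1) = eps / 4) by (unfold e; field; lra).
  apply Rabs_def2 in H0 as [H0u H0l]. apply Rabs_def2 in H1.
  apply Rmult_lt_compat_l with (r := t) in H0u, H0l; [|lra..].
  apply Rabs_def1; lra.
Qed.

(** * The primitive [u^th / th] of the weight [u^(th-1)] and its inverse *)

Definition power_primitive (th u : R) : R := / th * Rpower u th.

(* Inverse of [power_primitive th] on [0, ∞), extended continuously by [0] at [0]. *)
Definition power_primitive_inv (th w : R) : R :=
  if Rle_dec w 0 then 0 else Rpower (th * w) (/ th).

Section PowerPrimitive.
Variable th : R.
Hypothesis Hth : 0 < th.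

Lemma power_primitive_pos u : 0 < power_primitive th u.
Proof. apply Rmult_lt_0_compat; [apply Rinv_0_lt_compat, Hth | apply Rpower_gt0]. Qed.

Lemma power_primitive_lt u v : 0 < u < v -> power_primitive th u < power_primitive th v.
Proof. intros H. apply Rmult_lt_compat_l; [apply Rinv_0_lt_compat, Hth | apply Rlt_Rpower_l; lra]. Qed.

Lemma power_primitive_le u v : 0 < u <= v -> power_primitive th u <= power_primitive th v.
Proof. intros [Hu [Huv| ->]]; [left; apply power_primitive_lt|]; lra. Qed.

Lemma power_primitive_derive lo s : lo < s ->
  is_derive (fun s => power_primitive th (s - lo)) s (Rpower (s - lo) (th - 1)).
Proof.
  intros Hs. eapply is_derive_eq; [apply is_derive_scal, is_derive_Rpower_shift, Hs|].
  simpl. field. lra.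
Qed.

Lemma power_primitive_continuous lo s : lo < s -> continuous (fun s => power_primitive th (s - lo)) s.
Proof. intros Hs. eapply is_derive_continuous, power_primitive_derive, Hs. Qed.

Lemma power_primitive_inv_nonneg w : 0 <= power_primitive_inv th w.
Proof. unfold power_primitive_inv. destruct (Rle_dec w 0); [lra | left; apply Rpower_gt0]. Qed.

Lemma power_primitive_inv_pos w : 0 < w -> 0 < power_primitive_inv th w.
Proof. intros Hw. unfold power_primitive_inv. destruct (Rle_dec w 0); [lra | apply Rpower_gt0]. Qed.

Lemma power_primitive_inv_le w u : 0 < u -> w <= power_primitive th u -> power_primitive_inv th w <= u.
Proof.
  intros Hu Hw. unfold power_primitive_inv, power_primitive in *.
  destruct (Rle_dec w 0); [lra|].
  rewrite <- (Rpower_Rpower_inv u th) by lra.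
  apply Rle_Rpower_l; [left; apply Rinv_0_lt_compat, Hth|]. split; [nra|].
  apply (Rmult_le_compat_l th) in Hw; [|lra]. rewrite <- Rmult_assoc, Rinv_r, Rmult_1_l in Hw; lra.
Qed.

Lemma power_primitive_inv_cancel u : 0 < u -> power_primitive_inv th (power_primitive th u) = u.
Proof.
  intros Hu. pose proof (power_primitive_pos u). unfold power_primitive_inv, power_primitive in *.
  destruct (Rle_dec _ 0); [lra|].
  rewrite <- Rmult_assoc, Rinv_r, Rmult_1_l by lra. apply Rpower_Rpower_inv; lra.
Qed.

Lemma power_primitive_of_inv w : 0 < w -> power_primitive th (power_primitive_inv th w) = w.
Proof.
  intros Hw. unfold power_primitive_inv, power_primitive.
  destruct (Rle_dec w 0); [lra|]. rewrite Rpower_mult, Rinv_l, Rpower_1 by nra. field. lra.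
Qed.

Lemma power_primitive_inv_continuous w : 0 <= w -> continuous (power_primitive_inv th) w.
Proof.
  intros [Hw| <-].
  -
    apply continuity_pt_filterlim.
    apply continuity_pt_locally_ext with (f := fun y => Rpower (th * y) (/ th)) (a := w); [exact Hw| |].
    + intros y Hy. unfold power_primitive_inv. destruct (Rle_dec y 0); [|reflexivity].
      unfold Rdist in Hy. apply Rabs_def2 in Hy. lra.
    + apply continuity_pt_filterlim.
      apply (continuous_comp (fun y => th * y) (fun z => Rpower z (/ th))).
      * eapply is_derive_continuous. auto_derive; auto.
      * apply continuous_Rpower. nra.
  - (* at 0, [inv y < eps] as soon as [y < power_primitive th eps] *)
    apply continuous_of_eps_delta. intros eps He.
    exists (power_primitive th eps). split; [apply power_primitive_pos|]. intros y Hy.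
    rewrite Rminus_0_r in Hy. unfold power_primitive_inv at 2. destruct (Rle_dec 0 0) as [_|]; [|lra].
    rewrite Rminus_0_r. pose proof (power_primitive_inv_nonneg y). rewrite Rabs_right by lra.
    destruct (Rle_dec y 0) as [Hy0|Hy0].
    + unfold power_primitive_inv. destruct (Rle_dec y 0); lra.
    + rewrite Rabs_right in Hy by lra. apply Rnot_le_lt. intros Hle.
      enough (power_primitive th eps <= y) by lra.
      rewrite <- (power_primitive_of_inv y) by lra. apply power_primitive_le. lra.
Qed.

End PowerPrimitive.

(** * The one-sided weighted estimate *)

(* A majorant [K0 + K1 (s - lo)^al] of [|h'|], a primitive of it, and the integral of
   [power_primitive th (s - lo)] times the majorant over [lo, lo + u]. *)
Definition power_majorant (lo al K0 K1 s : R) : R := K0 + K1 * Rpower (s - lo) al.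

Definition majorant_primitive (lo al K0 K1 s : R) : R :=
  K0 * s + K1 * (/ (al + 1) * Rpower (s - lo) (al + 1)).

Definition weighted_majorant_integral (th al K0 K1 u : R) : R :=
  K0 * (/ (th * (th + 1)) * Rpower u (th + 1)) + K1 * (/ (th * (th + al + 1)) * Rpower u (th + al + 1)).

Lemma majorant_primitive_derive lo al K0 K1 s : 0 <= al -> lo < s ->
  is_derive (majorant_primitive lo al K0 K1) s (power_majorant lo al K0 K1 s).
Proof.
  intros Hal Hs. unfold majorant_primitive, power_majorant. eapply is_derive_eq.
  - apply (is_derive_plus (fun s => K0 * s) (fun s => K1 * (/ (al + 1) * Rpower (s - lo) (al + 1)))).
    + apply is_derive_scal, (is_derive_id (K:=R_AbsRing)).
    + apply is_derive_scal, is_derive_scal, is_derive_Rpower_shift, Hs.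
  - unfold plus, one; simpl. replace (al + 1 - 1) with al by ring. field. lra.
Qed.

Lemma weighted_majorant_integral_derive th lo al K0 K1 s : 0 < th -> 0 <= al -> lo < s ->
  is_derive (fun s => weighted_majorant_integral th al K0 K1 (s - lo)) s
    (power_primitive th (s - lo) * power_majorant lo al K0 K1 s).
Proof.
  intros Hth Hal Hs. unfold weighted_majorant_integral, power_primitive, power_majorant. eapply is_derive_eq.
  - apply (is_derive_plus (fun s => K0 * (/ (th * (th + 1)) * Rpower (s - lo) (th + 1)))
                          (fun s => K1 * (/ (th * (th + al + 1)) * Rpower (s - lo) (th + al + 1))));
      apply is_derive_scal, is_derive_scal, is_derive_Rpower_shift, Hs.
  - unfold plus; simpl. replace (th + 1 - 1) with th by ring.
    replace (th + al + 1 - 1) with (th + al) by ring. rewrite Rpower_plus. field. lra.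
Qed.

(* Where the majorant is nonnegative (and [K0 >= 0]) the weighted integral is nonnegative:
   if [K1 < 0] the second term is bounded below using [1/(th+al+1) <= 1/(th+1)]. *)
Lemma weighted_majorant_integral_nonneg th al K0 K1 u : 0 < th -> 0 <= al -> 0 <= K0 -> 0 < u ->
  0 <= K0 + K1 * Rpower u al -> 0 <= weighted_majorant_integral th al K0 K1 u.
Proof.
  intros Hth Hal HK0 Hu HG. unfold weighted_majorant_integral.
  replace (th + al + 1) with (th + 1 + al) by ring. rewrite (Rpower_plus (th + 1) al u).
  assert (Hr1 := Rpower_gt0 u (th + 1)). assert (Hr2 := Rpower_gt0 u al).
  set (r1 := Rpower u (th + 1)) in *. set (r2 := Rpower u al) in *.
  assert (Hc1 : 0 < / (th * (th + 1 + al))) by (apply Rinv_0_lt_compat; nra).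
  assert (Hinv : / (th * (th + 1 + al)) <= / (th * (th + 1))) by (apply Rinv_le_contravar; nra).
  replace (K1 * (/ (th * (th + 1 + al)) * (r1 * r2))) with ((K1 * r2) * (/ (th * (th + 1 + al)) * r1)) by ring.
  assert (0 <= K0 * (/ (th * (th + 1)) * r1)) by (apply Rmult_le_pos; [|apply Rmult_le_pos]; lra).
  destruct (Rle_dec 0 K1).
  - assert (0 <= (K1 * r2) * (/ (th * (th + 1 + al)) * r1)) by (apply Rmult_le_pos; [|apply Rmult_le_pos]; nra).
    lra.
  - assert (K1 * r2 <= 0) by nra.
    assert ((K1 * r2) * / (th * (th + 1)) <= (K1 * r2) * / (th * (th + 1 + al))) by nra.
    assert (0 <= (K0 + K1 * r2) * / (th * (th + 1)) * r1).
    { apply Rmult_le_pos; [apply Rmult_le_pos|]; [lra | left; apply Rinv_0_lt_compat; nra | lra]. }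
    nra.
Qed.

Lemma weighted_increment_integral th lo al K0 K1 x hi : 0 < th -> 0 <= al -> lo < x <= hi ->
  is_RInt (fun s => Rpower (s - lo) (th - 1) *
                    (majorant_primitive lo al K0 K1 hi - majorant_primitive lo al K0 K1 s)) x hi
    (weighted_majorant_integral th al K0 K1 (hi - lo) - weighted_majorant_integral th al K0 K1 (x - lo)
     - power_primitive th (x - lo) * (majorant_primitive lo al K0 K1 hi - majorant_primitive lo al K0 K1 x)).
Proof.
  intros Hth Hal Hx. set (Ga := majorant_primitive lo al K0 K1).
  set (Psi s := power_primitive th (s - lo) * (Ga hi - Ga s) + weighted_majorant_integral th al K0 K1 (s - lo)).
  assert (HGa : forall s, lo < s -> is_derive Ga s (power_majorant lo al K0 K1 s))
    by (intros; apply majorant_primitive_derive; lra).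
  replace (weighted_majorant_integral th al K0 K1 (hi - lo) - _ - _) with (minus (Psi hi) (Psi x))
    by (unfold Psi, minus, plus, opp; simpl; ring).
  apply (is_RInt_derive (V:=R_CompleteNormedModule) Psi); intros s Hs;
    rewrite Rmin_left, Rmax_right in Hs by lra.
  - eapply is_derive_eq.
    + apply (is_derive_plus (fun s => power_primitive th (s - lo) * (Ga hi - Ga s))).
      * apply (is_derive_mult (fun s => power_primitive th (s - lo)) (fun s => Ga hi - Ga s)).
        -- apply power_primitive_derive; lra.
        -- apply (is_derive_minus (fun _ => Ga hi) Ga);
             [apply (is_derive_const (K:=R_AbsRing)) | apply HGa; lra].
        -- intros; apply Rmult_comm.
      * apply weighted_majorant_integral_derive; lra.
    + unfold plus, mult, minus, opp, zero; simpl. unfold plus; simpl. ring.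
  - apply (continuous_mult (fun s => Rpower (s - lo) (th - 1)) (fun s => Ga hi - Ga s)).
    + apply continuous_Rpower_shift; lra.
    + apply (continuous_minus (fun _ => Ga hi) Ga); [apply continuous_const|].
      eapply is_derive_continuous, HGa; lra.
Qed.

Section OneSided.
Variables (h h' : R -> R) (lo hi th : R).
Hypothesis Hlh : lo < hi.
Hypothesis Hth : 0 < th.
Hypothesis Hd : forall s, lo <= s <= hi -> is_derive h s (h' s).

(* [W] is the primitive of the weight vanishing at [lo]; in the variable [w = W s] the weighted
   integrand [g] becomes [F], which is continuous up to [w = 0]. *)
Let W s := power_primitive th (s - lo).
Let F w := h (lo + power_primitive_inv th w).
Let g s := Rpower (s - lo) (th - 1) * h s.

Lemma h_continuous s : lo <= s <= hi -> continuous h s.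
Proof. intros H. eapply is_derive_continuous, Hd, H. Qed.

Lemma h_bounded : exists M, 0 <= M /\ forall s, lo <= s <= hi -> Rabs (h s) <= M.
Proof.
  destruct (continuity_ab_maj (fun s => Rabs (h s)) lo hi) as [Mx [H1 H2]]; [lra| |].
  - intros c Hc. apply continuity_pt_filterlim, continuous_Rabs_comp, h_continuous, Hc.
  - exists (Rabs (h Mx)). split; [apply Rabs_pos | exact H1].
Qed.

Lemma inverse_in_range w : 0 <= w <= W hi -> lo <= lo + power_primitive_inv th w <= hi.
Proof.
  intros Hw. pose proof (power_primitive_inv_nonneg th w).
  pose proof (power_primitive_inv_le th Hth w (hi - lo) ltac:(lra) (proj2 Hw)). lra.
Qed.

Lemma F_continuous w : 0 <= w <= W hi -> continuous F w.
Proof.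
  intros Hw. apply (continuous_comp (power_primitive_inv th) (fun z => h (lo + z))).
  - apply power_primitive_inv_continuous; lra.
  - apply (continuous_comp (fun z => lo + z) h).
    + eapply is_derive_continuous. auto_derive; auto.
    + apply h_continuous, inverse_in_range, Hw.
Qed.

Lemma ex_RInt_F p q : 0 <= p <= W hi -> 0 <= q <= W hi -> ex_RInt F p q.
Proof.
  intros Hp Hq. apply (ex_RInt_continuous (V:=R_CompleteNormedModule)). intros z Hz.
  apply F_continuous. split.
  - eapply Rle_trans; [|apply Hz]. apply Rmin_glb; lra.
  - eapply Rle_trans; [apply Hz|]. apply Rmax_lub; lra.
Qed.

Lemma RInt_F_Chasles p q r : 0 <= p <= W hi -> 0 <= q <= W hi -> 0 <= r <= W hi ->
  RInt F p r = RInt F p q + RInt F q r.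
Proof. intros. symmetry. apply (RInt_Chasles (V:=R_CompleteNormedModule)); apply ex_RInt_F; auto. Qed.

Lemma abs_RInt_F_le M p q : (forall s, lo <= s <= hi -> Rabs (h s) <= M) ->
  0 <= p <= q -> q <= W hi -> Rabs (RInt F p q) <= (q - p) * M.
Proof.
  intros HM Hp Hq. apply abs_RInt_le_const; [lra | apply ex_RInt_F; lra |].
  intros t Ht. apply HM, inverse_in_range. lra.
Qed.

Lemma RInt_weight_substitution x y : lo < x <= y -> y <= hi ->
  ex_RInt g x y /\ RInt g x y = RInt F (W x) (W y).
Proof.
  intros H1 H2.
  assert (Hc : forall s, Rmin x y <= s <= Rmax x y -> lo < s <= hi)
    by (intros s Hs; rewrite Rmin_left, Rmax_right in Hs by lra; lra).
  split.
  - apply (ex_RInt_continuous (V:=R_CompleteNormedModule)). intros s Hs. specialize (Hc s Hs).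
    apply (continuous_mult (fun s => Rpower (s - lo) (th - 1)) h);
      [apply continuous_Rpower_shift | apply h_continuous]; lra.
  - rewrite <- (RInt_comp (V:=R_CompleteNormedModule) F W (fun s => Rpower (s - lo) (th - 1))).
    + apply RInt_ext. intros s Hs. rewrite Rmin_left, Rmax_right in Hs by lra.
      unfold g, F, W. rewrite power_primitive_inv_cancel by lra.
      unfold scal; simpl; unfold mult; simpl. replace (lo + (s - lo)) with s by ring. reflexivity.
    + intros s Hs. specialize (Hc s Hs). apply F_continuous.
      split; [left; apply power_primitive_pos, Hth | apply power_primitive_le; lra].
    + intros s Hs. specialize (Hc s Hs).
      split; [apply power_primitive_derive | apply continuous_Rpower_shift]; lra.
Qed.

Lemma weighted_improper_integral : improper_int_is g lo hi (RInt F 0 (W hi)).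
Proof.
  assert (HW0 : 0 < W hi) by apply power_primitive_pos, Hth.
  destruct h_bounded as [M [HM0 HM]].
  apply improper_int_is_iff. split.
  - intros x y H1 H2 H3. apply RInt_weight_substitution; lra.
  - intros eps Heps. set (e := eps / (2 * (M + 1))).
    assert (He : 0 < e) by (apply Rdiv_lt_0_compat; lra).
    destruct (proj1 (filterlim_locally _ _) (power_primitive_continuous th Hth lo hi Hlh) (mkposreal e He))
      as [d2 Hd2].
    set (d1 := power_primitive_inv th e).
    assert (Hd1 : 0 < d1) by (apply power_primitive_inv_pos; lra).
    exists (Rmin d1 d2). split; [apply Rmin_pos; [exact Hd1 | apply cond_pos]|].
    intros x y Hx1 Hx2 Hxy Hy1 Hy2.
    pose proof (Rmin_l d1 d2). pose proof (Rmin_r d1 d2).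
    rewrite (proj2 (RInt_weight_substitution x y ltac:(lra) ltac:(lra))).
    assert (HWx : W x < e).
    { rewrite <- (power_primitive_of_inv th Hth e He). apply (power_primitive_lt th Hth). fold d1. lra. }
    assert (HWy : Rabs (W y - W hi) < e).
    { apply (Hd2 y). unfold ball; simpl; unfold AbsRing_ball, abs, minus, plus, opp; simpl.
      rewrite Rabs_left; lra. }
    assert (0 < W x) by apply power_primitive_pos, Hth.
    assert (W x <= W y) by (apply power_primitive_le; lra).
    assert (W y <= W hi) by (apply power_primitive_le; lra).
    rewrite (RInt_F_Chasles 0 (W x) (W hi)), (RInt_F_Chasles (W x) (W y) (W hi)) by lra.
    pose proof (abs_RInt_F_le M 0 (W x) HM ltac:(lra) ltac:(lra)).
    pose proof (abs_RInt_F_le M (W y) (W hi) HM ltac:(lra) ltac:(lra)).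
    apply Rabs_def2 in HWy.
    assert (W x * M + (W hi - W y) * M <= 2 * e * M) by nra.
    assert (2 * e * M < eps).
    { unfold e. replace (2 * (eps / (2 * (M + 1))) * M) with (eps * (M / (M + 1))) by (field; lra).
      assert (M / (M + 1) < 1) by (apply Rmult_lt_reg_r with (M + 1); [lra | field_simplify; lra]). nra. }
    replace (RInt F (W x) (W y) - (RInt F 0 (W x) + (RInt F (W x) (W y) + RInt F (W y) (W hi))))
      with (- (RInt F 0 (W x) + RInt F (W y) (W hi))) by ring.
    rewrite Rabs_Ropp. eapply Rle_lt_trans; [apply Rabs_triang | lra].
Qed.

Variables (al K0 K1 : R).
Hypothesis Hal : 0 <= al.
Hypothesis HK0 : 0 <= K0.
Hypothesis Hbound : forall s, lo < s <= hi -> Rabs (h' s) <= power_majorant lo al K0 K1 s.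

Let Ga := majorant_primitive lo al K0 K1.
Let E := weighted_majorant_integral th al K0 K1.

(* On a window [x, hi]: [h hi (W hi - W x) - ∫_x^hi g = ∫_x^hi W'(s) (h hi - h s) ds], and
   [|h hi - h s| <= Ga hi - Ga s] bounds this by the weighted majorant integral. *)
Lemma truncated_estimate x : lo < x < hi -> Rabs (h hi * (W hi - W x) - RInt g x hi) <= E (hi - lo).
Proof.
  intros Hx.
  assert (Hrng : forall s, Rmin x hi <= s <= Rmax x hi -> lo < s <= hi)
    by (intros s Hs; rewrite Rmin_left, Rmax_right in Hs by lra; lra).
  assert (HGa : forall s, lo < s -> is_derive Ga s (power_majorant lo al K0 K1 s))
    by (intros; apply majorant_primitive_derive; lra).
  assert (Hincr : forall s, lo < s <= hi -> Rabs (h hi - h s) <= Ga hi - Ga s).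
  { intros s Hs. apply (increment_le_of_derive_bound h h' Ga (power_majorant lo al K0 K1)); [lra|..];
      intros u Hu; [apply Hd | apply HGa | apply Hbound]; lra. }
  set (dW s := Rpower (s - lo) (th - 1)).
  set (k s := dW s * (h hi - h s)).
  assert (Hk : is_RInt k x hi (h hi * (W hi - W x) - RInt g x hi)).
  { assert (HdW : is_RInt dW x hi (W hi - W x)).
    { apply (is_RInt_derive (V:=R_CompleteNormedModule) (fun s => W s) dW); intros s Hs; apply Hrng in Hs;
        [apply power_primitive_derive | apply continuous_Rpower_shift]; lra. }
    eapply is_RInt_ext; [|apply (is_RInt_minus (V:=R_CompleteNormedModule) (fun s => h hi * dW s) g)].
    - intros s _. unfold k, g, dW, minus, plus, opp; simpl. ring.
    - apply (is_RInt_scal (V:=R_CompleteNormedModule) dW), HdW.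
    - apply (RInt_correct (V:=R_CompleteNormedModule)), RInt_weight_substitution; lra. }
  pose proof (weighted_increment_integral th lo al K0 K1 x hi Hth Hal ltac:(lra)) as Hkb.
  rewrite <- (is_RInt_unique _ _ _ _ Hk).
  eapply Rle_trans; [apply abs_RInt_le; [lra | eexists; exact Hk]|].
  eapply Rle_trans; [apply (RInt_le _ (fun s => dW s * (Ga hi - Ga s))); [lra | | eexists; exact Hkb |]|].
  - apply (ex_RInt_continuous (V:=R_CompleteNormedModule)). intros s Hs. apply Hrng in Hs.
    apply continuous_Rabs_comp, (continuous_mult dW (fun s => h hi - h s)).
    + apply continuous_Rpower_shift; lra.
    + apply (continuous_minus (fun _ => h hi) h); [apply continuous_const | apply h_continuous; lra].
  - intros s Hs. unfold k. rewrite Rabs_mult, Rabs_right by (left; apply Rpower_gt0).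
    apply Rmult_le_compat_l; [left; apply Rpower_gt0 | apply Hincr; lra].
  - eapply Rle_trans; [right; apply is_RInt_unique; exact Hkb|].
    assert (0 <= E (x - lo)).
    { apply weighted_majorant_integral_nonneg; try lra.
      eapply Rle_trans; [apply Rabs_pos | apply Hbound; lra]. }
    assert (0 <= Ga hi - Ga x) by (eapply Rle_trans; [apply Rabs_pos | apply Hincr; lra]).
    assert (0 <= power_primitive th (x - lo) * (Ga hi - Ga x))
      by (apply Rmult_le_pos; [left; apply power_primitive_pos | ]; lra).
    unfold E, Ga in *. lra.
Qed.

(* The one-sided estimate: the weighted improper integral [V] exists and [h hi W hi] is within
   the weighted majorant integral of it; let the window [x, hi] exhaust (lo, hi). *)
Lemma one_sided_estimate : exists V, improper_int_is g lo hi V /\ Rabs (h hi * W hi - V) <= E (hi - lo).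
Proof.
  exists (RInt F 0 (W hi)). split; [apply weighted_improper_integral|].
  destruct h_bounded as [M [HM0 HM]].
  assert (HW0 : 0 < W hi) by apply power_primitive_pos, Hth.
  apply (le_of_le_plus_small _ _ (Rabs (h hi) + M) (W hi)); [exact HW0 | pose proof (Rabs_pos (h hi)); lra|].
  intros eta Heta.
  set (x := lo + power_primitive_inv th eta).
  assert (Hx0 : lo < x) by (pose proof (power_primitive_inv_pos th eta ltac:(lra)); unfold x; lra).
  assert (HWx : W x = eta).
  { unfold W, x. replace (lo + power_primitive_inv th eta - lo) with (power_primitive_inv th eta) by ring.
    apply power_primitive_of_inv; lra. }
  assert (Hx1 : x < hi).
  { apply Rnot_le_lt. intros Hle. enough (W hi <= W x) by lra. apply power_primitive_le; lra. }
  pose proof (truncated_estimate x (conj Hx0 Hx1)) as Hbx.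
  rewrite (proj2 (RInt_weight_substitution x hi ltac:(lra) ltac:(lra))), HWx in Hbx.
  rewrite (RInt_F_Chasles 0 eta (W hi)) by lra.
  pose proof (abs_RInt_F_le M 0 eta HM ltac:(lra) ltac:(lra)).
  replace (h hi * W hi - (RInt F 0 eta + RInt F eta (W hi)))
    with ((h hi * (W hi - eta) - RInt F eta (W hi)) + (h hi * eta - RInt F 0 eta)) by ring.
  eapply Rle_trans; [apply Rabs_triang|].
  assert (Rabs (h hi * eta - RInt F 0 eta) <= (Rabs (h hi) + M) * eta).
  { eapply Rle_trans; [apply Rabs_triang|]. rewrite Rabs_Ropp, Rabs_mult, (Rabs_right eta) by lra. nra. }
  lra.
Qed.

End OneSided.

(** * From (α,m)-convexity to a majorant of [|h'|] *)

(* Coefficients of the tangent line at [Y] of [x ↦ x^(1/q)], evaluated along the segment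
   [τ A + m (1 - τ) B]: constant term and slope in [τ]. *)
Definition tangent_K0 (q m B Y : R) : R := Rpower Y (1 / q) + 1 / q * Rpower Y (1 / q - 1) * (m * B - Y).
Definition tangent_K1 (q m A B Y : R) : R := 1 / q * Rpower Y (1 / q - 1) * (A - m * B).

Lemma root_linear_majorant q m A B Y X tau : 1 <= q -> 0 < Y -> 0 <= X ->
  X <= tau * A + m * (1 - tau) * B -> rpow X (1 / q) <= tangent_K0 q m B Y + tangent_K1 q m A B Y * tau.
Proof.
  intros Hq HY HX HXb. eapply Rle_trans; [apply (root_tangent_bound X Y q); lra|].
  assert (0 <= 1 / q * Rpower Y (1 / q - 1))
    by (apply Rmult_le_pos; [left; apply Rdiv_lt_0_compat | left; apply Rpower_gt0]; lra).
  assert (1 / q * Rpower Y (1 / q - 1) * (X - Y) <=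
          1 / q * Rpower Y (1 / q - 1) * (tau * A + m * (1 - tau) * B - Y))
    by (apply Rmult_le_compat_l; lra).
  unfold tangent_K0, tangent_K1. lra.
Qed.

(* The constant term of the tangent majorant is nonnegative, since [x^(1/q)] is concave. *)
Lemma tangent_K0_nonneg q m B Y : 1 <= q -> 0 <= m -> 0 <= B -> 0 < Y -> 0 <= tangent_K0 q m B Y.
Proof.
  intros Hq Hm HB HY. unfold tangent_K0.
  assert (HYr : Rpower Y (1 / q - 1) * Y = Rpower Y (1 / q))
    by (rewrite <- Rpower_plus1 by exact HY; f_equal; ring).
  assert (Hr : 0 < 1 / q <= 1).
  { split; [apply Rdiv_lt_0_compat; lra|].
    unfold Rdiv; rewrite Rmult_1_l, <- Rinv_1. apply Rinv_le_contravar; lra. }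
  pose proof (Rpower_gt0 Y (1 / q - 1)).
  rewrite <- HYr.
  assert (0 <= (1 - 1 / q) * (Rpower Y (1 / q - 1) * Y)) by (apply Rmult_le_pos; nra).
  assert (0 <= 1 / q * Rpower Y (1 / q - 1) * (m * B)) by (repeat apply Rmult_le_pos; lra).
  lra.
Qed.

(* With the mean value [P / (al + th + 1)] of the bound as tangency point, the slope term
   integrates against the weight to exactly cancel the constant correction: the weighted
   majorant integral is [L^(th+1)/(th(th+1)) (P/(al+th+1))^(1/q)]. *)
Lemma tangent_weighted_integral th al q m A B L : 0 < th -> 0 <= al -> 1 <= q -> 0 < L ->
  let P := (th + 1) * A + al * m * B in 0 < P ->
  weighted_majorant_integral th al (tangent_K0 q m B (P / (al + th + 1)))
    (tangent_K1 q m A B (P / (al + th + 1)) / Rpower L al) L =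
  Rpower L (th + 1) / th * / (th + 1) * Rpower (P / (al + th + 1)) (1 / q).
Proof.
  intros Hth Hal Hq HL P HP. unfold weighted_majorant_integral, tangent_K0, tangent_K1.
  replace (th + al + 1) with ((th + 1) + al) by ring. rewrite (Rpower_plus (th + 1) al L).
  pose proof (Rpower_gt0 L al). unfold P. field. repeat split; try lra; apply Rgt_not_eq; lra.
Qed.

Section ConvexMajorant.
Variables (h' : R -> R) (lo hi al q m A B : R).
Hypothesis Hlh : lo < hi.
Hypothesis Hq : 1 <= q.
Hypothesis Hc : forall s, lo < s <= hi -> rpow (Rabs (h' s)) q <=
  rpow ((s - lo) / (hi - lo)) al * A + m * (1 - rpow ((s - lo) / (hi - lo)) al) * B.

Lemma abs_as_root s : Rabs (h' s) = rpow (rpow (Rabs (h' s)) q) (1 / q).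
Proof. rewrite rpow_rpow; [reflexivity | apply Rabs_pos | lra]. Qed.

Lemma tangent_majorant Y : 0 < Y -> forall s, lo < s <= hi ->
  Rabs (h' s) <= power_majorant lo al (tangent_K0 q m B Y) (tangent_K1 q m A B Y / Rpower (hi - lo) al) s.
Proof.
  intros HY s Hs. unfold power_majorant. rewrite abs_as_root.
  pose proof (Rpower_gt0 (hi - lo) al).
  replace (tangent_K1 q m A B Y / Rpower (hi - lo) al * Rpower (s - lo) al)
    with (tangent_K1 q m A B Y * (Rpower (s - lo) al / Rpower (hi - lo) al)) by (field; lra).
  apply root_linear_majorant; [lra | exact HY | apply rpow_ge0 |].
  rewrite <- Rpower_div, <- rpow_pos by (try apply Rdiv_lt_0_compat; lra). apply Hc, Hs.
Qed.

Lemma zero_majorant : A = 0 -> al * B = 0 -> forall s, lo < s <= hi ->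
  Rabs (h' s) <= power_majorant lo al 0 0 s.
Proof.
  intros HA0 HalB s Hs. unfold power_majorant. rewrite abs_as_root.
  assert (Hz : rpow (Rabs (h' s)) q <= 0).
  { eapply Rle_trans; [apply Hc, Hs|]. rewrite HA0.
    apply Rmult_integral in HalB as [->| ->].
    - rewrite rpow_pos, Rpower_O by (apply Rdiv_lt_0_compat; lra). lra.
    - lra. }
  pose proof (rpow_ge0 (Rabs (h' s)) q). replace (rpow (Rabs (h' s)) q) with 0 by lra.
  rewrite rpow_0l by (apply Rgt_not_eq, Rdiv_lt_0_compat; lra). lra.
Qed.

End ConvexMajorant.

Lemma convex_one_sided_estimate (h h' : R -> R) lo hi th al q m A B :
  lo < hi -> 0 < th -> 0 <= al <= 1 -> 1 <= q -> 0 < m -> 0 <= A -> 0 <= B ->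
  (forall s, lo <= s <= hi -> is_derive h s (h' s)) ->
  (forall s, lo < s <= hi -> rpow (Rabs (h' s)) q <=
      rpow ((s - lo) / (hi - lo)) al * A + m * (1 - rpow ((s - lo) / (hi - lo)) al) * B) ->
  exists V, improper_int_is (fun s => Rpower (s - lo) (th - 1) * h s) lo hi V /\
  Rabs (h hi * power_primitive th (hi - lo) - V) <=
     Rpower (hi - lo) (th + 1) / th * / (th + 1) *
       (rpow (1 / (al + th + 1)) (1 / q) * rpow ((th + 1) * A + al * m * B) (1 / q)).
Proof.
  intros Hlh Hth Hal Hq Hm HA HB Hd Hc.
  set (P := (th + 1) * A + al * m * B).
  assert (HalmB : 0 <= al * m * B) by (repeat apply Rmult_le_pos; lra).
  assert (HthA : 0 <= (th + 1) * A) by (apply Rmult_le_pos; lra).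
  destruct (Rle_lt_or_eq_dec 0 P ltac:(unfold P; lra)) as [HP|HP0].
  - (* the tangent line at the mean value [Y] of the bound *)
    set (Y := P / (al + th + 1)).
    assert (HY : 0 < Y) by (unfold Y; apply Rdiv_lt_0_compat; lra).
    destruct (one_sided_estimate h h' lo hi th Hlh Hth Hd al _ _ ltac:(lra)
                ltac:(apply (tangent_K0_nonneg q m B Y); lra)
                (tangent_majorant h' lo hi al q m A B Hlh Hq Hc Y HY)) as [V [HV HVb]].
    exists V. split; [exact HV|]. eapply Rle_trans; [exact HVb|].
    unfold Y, P. rewrite tangent_weighted_integral by (fold P; lra). fold P. right. f_equal.
    rewrite <- rpow_mult; [| left; apply Rdiv_lt_0_compat; lra | lra | apply Rgt_not_eq, Rdiv_lt_0_compat; lra].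
    rewrite rpow_pos by (apply Rmult_lt_0_compat; [apply Rdiv_lt_0_compat|]; lra).
    f_equal. unfold Rdiv. ring.
  -
    assert (HA0 : A = 0).
    { assert (HA1 : (th + 1) * A = 0) by (unfold P in HP0; lra).
      apply Rmult_integral in HA1 as [?|?]; lra. }
    assert (HalB : al * B = 0).
    { assert (H0 : al * B * m = 0) by (unfold P in HP0; lra).
      apply Rmult_integral in H0 as [?|?]; lra. }
    destruct (one_sided_estimate h h' lo hi th Hlh Hth Hd al 0 0 ltac:(lra) ltac:(lra)
                (zero_majorant h' lo hi al q m A B Hlh Hq Hc HA0 HalB)) as [V [HV HVb]].
    exists V. split; [exact HV|]. eapply Rle_trans; [exact HVb|].
    unfold weighted_majorant_integral. rewrite !Rmult_0_l, Rplus_0_r.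
    apply Rmult_le_pos; [|apply Rmult_le_pos; apply rpow_ge0].
    apply Rmult_le_pos; [apply Rdiv_le_0_compat; [left; apply Rpower_gt0 | lra] |].
    left; apply Rinv_0_lt_compat; lra.
Qed.

(** * The midpoint inequality *)

Lemma interior_segment (I : R -> Prop) x y : is_interval I -> (forall z, I z -> 0 <= z) ->
  interior I x -> interior I y -> 0 < x /\ forall s, x <= s <= y -> interior I s.
Proof.
  intros hI hI0 [d1 Hd1] [d2 Hd2].
  assert (Hball : forall z (d : posreal), included (disc z d) I -> forall w, Rabs (w - z) < d -> I w)
    by (intros z d Hd w Hw; apply Hd, Hw).
  pose proof (cond_pos d1). pose proof (cond_pos d2).
  split.
  - (* [x - d1/2] lies in [I], hence is nonnegative *)
    assert (Hx : I (x - d1 / 2)) by (apply (Hball x d1 Hd1); rewrite Rabs_left; lra).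
    apply hI0 in Hx. lra.
  - intros s Hs. assert (Hp : 0 < Rmin d1 d2) by (apply Rmin_pos; lra).
    exists (mkposreal _ Hp). intros w Hw. unfold disc in Hw; simpl in Hw.
    pose proof (Rmin_l d1 d2). pose proof (Rmin_r d1 d2). apply Rabs_def2 in Hw.
    destruct (Rlt_dec w x); [apply (Hball x d1 Hd1); apply Rabs_def1; lra|].
    destruct (Rlt_dec y w); [apply (Hball y d2 Hd2); apply Rabs_def1; lra|].
    apply (hI x w y); [apply (Hball x d1 Hd1) | apply (Hball y d2 Hd2) | ]; rewrite ?Rminus_diag, ?Rabs_R0; lra.
Qed.

Section HalfEstimates.
Variables (f f' : R -> R) (q m alpha a b th : R).
Hypothesis hq : 1 <= q.
Hypothesis hm : 0 < m <= 1.
Hypothesis halpha : 0 <= alpha <= 1.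
Hypothesis hab : a < b.
Hypothesis hma : 0 < m * a.
Hypothesis hth : 0 < th.
Hypothesis hder : forall s, m * a <= s <= b -> is_derive f s (f' s).
Hypothesis hconv : alpha_m_convex alpha m (fun x => m * a <= x <= b) (fun x => rpow (Rabs (f' x)) q).

Let c := m * (a + b) / 2.
Let L := m * (b - a) / 2.
Let Bnd (e : R) := Rpower L (th + 1) / th * / (th + 1) *
  (rpow (1 / (alpha + th + 1)) (1 / q) *
   rpow ((th + 1) * rpow (Rabs (f' c)) q + alpha * m * rpow (Rabs (f' e)) q) (1 / q)).

Lemma half_length_pos : 0 < L.
Proof. unfold L. apply Rdiv_lt_0_compat; nra. Qed.

Lemma midpoint_bounds : m * a < c < m * b /\ m * b <= b.
Proof.
  assert (0 < a) by (destruct (Rle_dec a 0); [nra | lra]).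
  unfold c. repeat split; nra.
Qed.

Lemma left_half_estimate : Rabs (f c * power_primitive th L - Gamma th * J_left th c f (m * a)) <= Bnd a.
Proof.
  pose proof half_length_pos as HL. pose proof midpoint_bounds as Hmid.
  assert (HcL : c - m * a = L) by (unfold c, L; field).
  destruct (convex_one_sided_estimate f f' (m * a) c th alpha q m (rpow (Rabs (f' c)) q) (rpow (Rabs (f' a)) q))
    as [V [HV HVb]]; try apply rpow_ge0; try lra.
  - intros s Hs. apply hder. lra.
  - intros s Hs. rewrite HcL.
    set (t := (s - m * a) / L).
    assert (Ht : 0 <= t <= 1) by (apply ratio_in_unit; lra).
    assert (Es : t * c + m * (1 - t) * a = s) by (unfold t, c, L in *; field; lra).
    pose proof (hconv c a t ltac:(lra) ltac:(nra) Ht ltac:(rewrite Es; lra)) as H.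
    rewrite Es in H. exact H.
  - rewrite HcL in HVb. unfold J_left. rewrite (improper_int_eq _ (m * a) c V ltac:(lra) HV).
    rewrite <- Rmult_assoc, Rinv_r, Rmult_1_l by (apply Rgt_not_eq, Gamma_spec, hth). exact HVb.
Qed.

Lemma right_half_estimate : Rabs (f c * power_primitive th L - Gamma th * J_right th c f (m * b)) <= Bnd b.
Proof.
  pose proof half_length_pos as HL. pose proof midpoint_bounds as Hmid.
  assert (HcL : - c - - (m * b) = L) by (unfold c, L; field).
  destruct (convex_one_sided_estimate (fun u => f (- u)) (fun u => - f' (- u)) (- (m * b)) (- c) th alpha q m
              (rpow (Rabs (f' c)) q) (rpow (Rabs (f' b)) q)) as [V [HV HVb]]; try apply rpow_ge0; try lra.
  - intros u Hu. eapply is_derive_eq.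
    + apply (is_derive_comp f (fun u => - u)); [apply hder; lra | auto_derive; auto].
    + unfold scal; simpl; unfold mult; simpl. ring.
  - intros u Hu. rewrite Rabs_Ropp, HcL.
    set (t := (u - - (m * b)) / L).
    assert (Ht : 0 <= t <= 1) by (apply ratio_in_unit; lra).
    assert (Es : t * c + m * (1 - t) * b = - u) by (unfold t, c, L in *; field; lra).
    pose proof (hconv c b t ltac:(lra) ltac:(nra) Ht ltac:(rewrite Es; lra)) as H.
    rewrite Es in H. exact H.
  - rewrite HcL, Ropp_involutive in HVb. unfold J_right.
    assert (HV' : improper_int_is (fun s => Rpower (m * b - s) (th - 1) * f s) c (m * b) V).
    { apply (improper_int_is_reflect _ (fun s => Rpower (s - - (m * b)) (th - 1) * f (- s))).
      - intros u. f_equal. f_equal. ring.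
      - exact HV. }
    rewrite (improper_int_eq _ c (m * b) V ltac:(lra) HV').
    rewrite <- Rmult_assoc, Rinv_r, Rmult_1_l by (apply Rgt_not_eq, Gamma_spec, hth). exact HVb.
Qed.

End HalfEstimates.

Lemma normalising_constant th m a b : 0 < th -> 0 < m -> a < b ->
  Gamma (th + 1) * rpow 2 (th - 1) / (rpow m th * rpow (b - a) th) =
  Gamma th / (2 * power_primitive th (m * (b - a) / 2)).
Proof.
  intros Hth Hm Hab. set (L := m * (b - a) / 2). assert (HL : 0 < L) by (unfold L; apply Rdiv_lt_0_compat; nra).
  rewrite Gamma_succ, !rpow_pos by lra.
  replace (Rpower m th * Rpower (b - a) th) with (Rpower 2 (th - 1) * 2 * Rpower L th).
  - pose proof (Rpower_gt0 2 (th - 1)). pose proof (Rpower_gt0 L th).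
    unfold power_primitive. field. repeat split; lra.
  - rewrite <- Rpower_plus1, Rpower_mult_distr by lra. replace (th - 1 + 1) with th by ring.
    rewrite Rpower_mult_distr by lra. f_equal. unfold L. field.
Qed.

Lemma average_of_estimates x u v G P D1 D2 : 0 < P ->
  Rabs (x * P - G * u) <= D1 -> Rabs (x * P - G * v) <= D2 ->
  Rabs (x - G / (2 * P) * (u + v)) <= (D1 + D2) / (2 * P).
Proof.
  intros HP H1 H2.
  replace (x - G / (2 * P) * (u + v)) with (/ (2 * P) * ((x * P - G * u) + (x * P - G * v))) by (field; lra).
  rewrite Rabs_mult, Rabs_right by (left; apply Rinv_0_lt_compat; lra).
  unfold Rdiv. rewrite Rmult_comm. apply Rmult_le_compat_r; [left; apply Rinv_0_lt_compat; lra|].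
  eapply Rle_trans; [apply Rabs_triang | lra].
Qed.

Theorem mainTheorem6 (q : R) (I : R -> Prop) (f f' : R -> R) (m alpha a b : R)
  (hq : 1 <= q)
  (hI : is_interval I) (hI0 : forall x, I x -> 0 <= x)
  (hf' : forall x, interior I x -> derivable_pt_lim f x (f' x))
  (hm : 0 < m <= 1) (halpha : 0 <= alpha <= 1) (hab : a < b)
  (hma : interior I (m * a)) (hb : interior I b)
  (hconv : alpha_m_convex alpha m (fun x => m * a <= x <= b)
             (fun x => rpow (Rabs (f' x)) q))
  (theta : R) (htheta : 0 < theta) :
  let c := m * (a + b) / 2 in
  Rabs (f c - Gamma (theta + 1) * rpow 2 (theta - 1)
                / (rpow m theta * rpow (b - a) theta)
              * (J_left theta c f (m * a) + J_right theta c f (m * b)))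
  <= m * (b - a) / 4 * (1 / (theta + 1)) * rpow (1 / (alpha + theta + 1)) (1 / q)
     * (rpow ((theta + 1) * rpow (Rabs (f' c)) q + alpha * m * rpow (Rabs (f' a)) q) (1 / q)
        + rpow ((theta + 1) * rpow (Rabs (f' c)) q + alpha * m * rpow (Rabs (f' b)) q) (1 / q)).
Proof.
  intros c.
  destruct (interior_segment I (m * a) b hI hI0 hma hb) as [Hma0 Hin].
  assert (hder : forall s, m * a <= s <= b -> is_derive f s (f' s))
    by (intros s Hs; apply is_derive_Reals, hf', Hin, Hs).
  set (L := m * (b - a) / 2).
  assert (HL : 0 < L) by (unfold L; apply Rdiv_lt_0_compat; nra).
  pose proof (left_half_estimate f f' q m alpha a b theta hq hm halpha hab Hma0 htheta hder hconv) as Hleft.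
  pose proof (right_half_estimate f f' q m alpha a b theta hq hm halpha hab Hma0 htheta hder hconv) as Hright.
  rewrite normalising_constant by lra.
  eapply Rle_trans;
    [apply (average_of_estimates _ _ _ _ _ _ _ (power_primitive_pos theta htheta L) Hleft Hright)|].
  right. unfold c, power_primitive. rewrite Rpower_plus1 by exact HL. unfold L.
  pose proof (Rpower_gt0 (m * (b - a) / 2) theta). field. lra.
Qed.
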